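(* Let $T_{\mathrm{Prog}}=(V,\mathit{Init},\mathit{TR})$ with $V=\{pc,x,z_1,z_2,y_1,y_2\}$ be the transition system defined as follows (locations are encoded as integers $\mathrm{start}=0$, $\mathrm{loop}_1=1$, $\mathrm{loop}_2=2$, $\mathrm{end}=3$): $\mathit{Init} := pc=\mathrm{start}\wedge x>0\wedge z_1=x\wedge z_2=2x\wedge y_1=0\wedge y_2=0$, and $\mathit{TR}$ is the disjunction of the following cases, where in each case every variable not mentioned keeps its value ($v'=v$): (1) $pc\in\{\mathrm{start},\mathrm{loop}_1\}\wedge z_1>0\wedge pc'=\mathrm{loop}_1\wedge z_1'=z_1-1\wedge y_1'=y_1+x$; (2) $pc\in\{\mathrm{start},\mathrm{loop}_1\}\wedge z_1\le 0\wedge pc'=\mathrm{loop}_2$; (3) $pc=\mathrm{loop}_2\wedge z_2>0\wedge pc'=\mathrm{loop}_2\wedge z_2'=z_2-1\wedge y_2'=y_2+x$; (4) $pc=\mathrm{loop}_2\wedge z_2\le 0\wedge pc'=\mathrm{end}$; (5) $pc=\mathrm{end}\wedge pc'=\mathrm{end}$. (This encodes the program which, on input $x>0$, computes $y_1=x^2$ by adding $x$ to $y_1$ exactly $x$ times, then computes $y_2=2x^2$ by adding $x$ to $y_2$ exactly $2x$ times, and then asserts $y_2=2y_1$.) Let $P := (pc=\mathrm{end})\to(y_2=2y_1)$. Then $T_{\mathrm{Prog}}\models P$, but there is no inductive invariant for $T_{\mathrm{Prog}}$ and $P$ that is a QFLIA formula over $V$.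
   Context: QFLIA (quantifier-free linear integer arithmetic) formulas are built from integer-valued variables, integer constants, addition, multiplication by integer constants, the relations $=,<,\le$, and Boolean connectives, with no quantifiers; all variables range over $\mathbb{Z}$. A transition system is a tuple $T=(V,\mathit{Init},\mathit{TR})$ where $V$ is a finite set of integer variables, $\mathit{Init}$ is a QFLIA formula over $V$, and $\mathit{TR}$ is a QFLIA formula over $V\uplus V'$, where $V'=\{v' : v\in V\}$ is a primed copy of $V$. A state is an assignment $V\to\mathbb{Z}$. The initial states are those satisfying $\mathit{Init}$. A pair of states $(s,t)$ is a transition if $\mathit{TR}$ holds when unprimed variables take their values from $s$ and primed variables from $t$. Reachable states are those reachable from an initial state by finitely many transitions. A safety property is a QFLIA formula $P$ over $V$. We write $T\models P$ if every reachable state satisfies $P$. An inductive invariant for $T$ and $P$ is a formula $I$ over $V$ such that: (i) $\mathit{Init}\to I$ is valid; (ii) $I\wedge \mathit{TR}\to I'$ is valid, where $I'$ is obtained from $I$ by replacing each $v\in V$ with $v'$; and (iii) $I\to P$ is valid. *)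

From Stdlib Require Import ZArith.
Open Scope Z_scope.

Inductive term (A : Type) : Type :=
| TConst : Z -> term A
| TVar : A -> term A
| TAdd : term A -> term A -> term A
| TMul : Z -> term A -> term A.

Inductive formula (A : Type) : Type :=
| FTrue : formula A
| FFalse : formula A
| FEq : term A -> term A -> formula A
| FLt : term A -> term A -> formula A
| FLe : term A -> term A -> formula A
| FNot : formula A -> formula A
| FAnd : formula A -> formula A -> formula A
| FOr : formula A -> formula A -> formula A.

Arguments TConst {A}. Arguments TVar {A}. Arguments TAdd {A}. Arguments TMul {A}.
Arguments FTrue {A}. Arguments FFalse {A}. Arguments FEq {A}. Arguments FLt {A}.
Arguments FLe {A}. Arguments FNot {A}. Arguments FAnd {A}. Arguments FOr {A}.

Definition FImp {A} (f g : formula A) : formula A := FOr (FNot f) g.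

Fixpoint eval_term {A} (s : A -> Z) (t : term A) : Z :=
  match t with
  | TConst c => c
  | TVar a => s a
  | TAdd t u => eval_term s t + eval_term s u
  | TMul c t => c * eval_term s t
  end.

Fixpoint holds {A} (s : A -> Z) (f : formula A) : Prop :=
  match f with
  | FTrue => True
  | FFalse => False
  | FEq t u => eval_term s t = eval_term s u
  | FLt t u => eval_term s t < eval_term s u
  | FLe t u => eval_term s t <= eval_term s u
  | FNot f => ~ holds s f
  | FAnd f g => holds s f /\ holds s g
  | FOr f g => holds s f \/ holds s g
  end.

(** * Transition systems: TR is a formula over V ⊎ V' (inl = unprimed, inr = primed) *)
Record transition_system (V : Type) : Type := mkTS {
  ts_Init : formula V;
  ts_TR : formula (V + V)
}.
Arguments mkTS {V}. Arguments ts_Init {V}. Arguments ts_TR {V}.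

Definition pair_state {V} (s t : V -> Z) : V + V -> Z :=
  fun v => match v with inl a => s a | inr a => t a end.

Definition is_transition {V} (T : transition_system V) (s t : V -> Z) : Prop :=
  holds (pair_state s t) (ts_TR T).

Inductive reachable {V} (T : transition_system V) : (V -> Z) -> Prop :=
| reach_init : forall s, holds s (ts_Init T) -> reachable T s
| reach_step : forall s t, reachable T s -> is_transition T s t -> reachable T t.

Definition models {V} (T : transition_system V) (P : formula V) : Prop :=
  forall s, reachable T s -> holds s P.

Fixpoint prime_term {V} (t : term V) : term (V + V) :=
  match t with
  | TConst c => TConst c
  | TVar a => TVar (inr a)
  | TAdd t u => TAdd (prime_term t) (prime_term u)
  | TMul c t => TMul c (prime_term t)
  end.
Fixpoint prime_formula {V} (f : formula V) : formula (V + V) :=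
  match f with
  | FTrue => FTrue | FFalse => FFalse
  | FEq t u => FEq (prime_term t) (prime_term u)
  | FLt t u => FLt (prime_term t) (prime_term u)
  | FLe t u => FLe (prime_term t) (prime_term u)
  | FNot f => FNot (prime_formula f)
  | FAnd f g => FAnd (prime_formula f) (prime_formula g)
  | FOr f g => FOr (prime_formula f) (prime_formula g)
  end.
Fixpoint unprime_term {V} (t : term V) : term (V + V) :=
  match t with
  | TConst c => TConst c
  | TVar a => TVar (inl a)
  | TAdd t u => TAdd (unprime_term t) (unprime_term u)
  | TMul c t => TMul c (unprime_term t)
  end.
Fixpoint unprime_formula {V} (f : formula V) : formula (V + V) :=
  match f with
  | FTrue => FTrue | FFalse => FFalse
  | FEq t u => FEq (unprime_term t) (unprime_term u)
  | FLt t u => FLt (unprime_term t) (unprime_term u)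
  | FLe t u => FLe (unprime_term t) (unprime_term u)
  | FNot f => FNot (unprime_formula f)
  | FAnd f g => FAnd (unprime_formula f) (unprime_formula g)
  | FOr f g => FOr (unprime_formula f) (unprime_formula g)
  end.

Definition valid {A} (f : formula A) : Prop := forall s : A -> Z, holds s f.

Definition inductive_invariant {V} (T : transition_system V) (P I : formula V) : Prop :=
  valid (FImp (ts_Init T) I) /\
  valid (FImp (FAnd (unprime_formula I) (ts_TR T)) (prime_formula I)) /\
  valid (FImp I P).

Inductive var : Type := pc | x | z1 | z2 | y1 | y2.

Definition v {A} (a : A) : term A := TVar a.
Definition c {A} (n : Z) : term A := TConst n.
Definition u (a : var) : term (var + var) := TVar (inl a).
Definition p (a : var) : term (var + var) := TVar (inr a).

(* locations: start = 0, loop1 = 1, loop2 = 2, end = 3 *)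
Definition Init_Prog : formula var :=
  FAnd (FEq (v pc) (c 0))
  (FAnd (FLt (c 0) (v x))
  (FAnd (FEq (v z1) (v x))
  (FAnd (FEq (v z2) (TMul 2 (v x)))
  (FAnd (FEq (v y1) (c 0))
        (FEq (v y2) (c 0)))))).

Definition keep (a : var) : formula (var + var) := FEq (p a) (u a).

Definition TR_Prog : formula (var + var) :=
  let pc01 := FOr (FEq (u pc) (c 0)) (FEq (u pc) (c 1)) in
  FOr
  (FAnd pc01 (FAnd (FLt (c 0) (u z1)) (FAnd (FEq (p pc) (c 1))
    (FAnd (FEq (p z1) (TAdd (u z1) (c (-1))))
    (FAnd (FEq (p y1) (TAdd (u y1) (u x)))
    (FAnd (keep x) (FAnd (keep z2) (keep y2))))))))
  (FOr
  (FAnd pc01 (FAnd (FLe (u z1) (c 0)) (FAnd (FEq (p pc) (c 2))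
    (FAnd (keep x) (FAnd (keep z1) (FAnd (keep z2) (FAnd (keep y1) (keep y2))))))))
  (FOr
  (FAnd (FEq (u pc) (c 2)) (FAnd (FLt (c 0) (u z2)) (FAnd (FEq (p pc) (c 2))
    (FAnd (FEq (p z2) (TAdd (u z2) (c (-1))))
    (FAnd (FEq (p y2) (TAdd (u y2) (u x)))
    (FAnd (keep x) (FAnd (keep z1) (keep y1))))))))
  (FOr
  (FAnd (FEq (u pc) (c 2)) (FAnd (FLe (u z2) (c 0)) (FAnd (FEq (p pc) (c 3))
    (FAnd (keep x) (FAnd (keep z1) (FAnd (keep z2) (FAnd (keep y1) (keep y2))))))))
  (FAnd (FEq (u pc) (c 3)) (FAnd (FEq (p pc) (c 3))
    (FAnd (keep x) (FAnd (keep z1) (FAnd (keep z2) (FAnd (keep y1) (keep y2)))))))))).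

Definition T_Prog : transition_system var := mkTS Init_Prog TR_Prog.

Definition P_Prog : formula var :=
  FImp (FEq (v pc) (c 3)) (FEq (v y2) (TMul 2 (v y1))).

From Stdlib Require Import ZArith Lia Relation_Operators.

(* Safety holds because y1 = x*(x - z1) and y2 = x*(2x - z2) are invariant, which
   is not linear. Conversely, take an inductive invariant I and the states at the
   entry of the second loop, x = X, y1 = Y, the other variables fixed (affinely)
   in terms of X. Every term of I is affine in (X, Y) there, so for X large each
   atom of I, and hence I, has the same truth value at Y = X^2 and Y = X^2 + 1.
   The first state is reached from an initial state, so I holds at the second,
   from which the second loop leads to pc = end with y2 = 2X^2 <> 2(X^2 + 1). *)

Definition leads_to {V} (T : transition_system V) : (V -> Z) -> (V -> Z) -> Prop :=
  clos_refl_trans (V -> Z) (is_transition T).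

Lemma eval_unprime_term {V} (s t : V -> Z) (e : term V) :
  eval_term (pair_state s t) (unprime_term e) = eval_term s e.
Proof. induction e; simpl; congruence. Qed.

Lemma eval_prime_term {V} (s t : V -> Z) (e : term V) :
  eval_term (pair_state s t) (prime_term e) = eval_term t e.
Proof. induction e; simpl; congruence. Qed.

Lemma holds_unprime {V} (s t : V -> Z) (f : formula V) :
  holds (pair_state s t) (unprime_formula f) <-> holds s f.
Proof. induction f; simpl; rewrite ?eval_unprime_term; tauto. Qed.

Lemma holds_prime {V} (s t : V -> Z) (f : formula V) :
  holds (pair_state s t) (prime_formula f) <-> holds t f.
Proof. induction f; simpl; rewrite ?eval_prime_term; tauto. Qed.

Section InductiveInvariant.
Context {V : Type} {T : transition_system V} {P I : formula V}.
Hypothesis HI : inductive_invariant T P I.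

Lemma inductive_invariant_init s : holds s (ts_Init T) -> holds s I.
Proof. destruct HI as [Hinit _]; specialize (Hinit s); simpl in Hinit; tauto. Qed.

Lemma inductive_invariant_leads_to s t : leads_to T s t -> holds s I -> holds t I.
Proof.
  destruct HI as [_ [Hstep _]].
  induction 1 as [s t Hst | s | s r t _ IHsr _ IHrt]; auto.
  intros Hs; specialize (Hstep (pair_state s t)); simpl in Hstep.
  rewrite holds_unprime, holds_prime in Hstep. unfold is_transition in Hst. tauto.
Qed.

Lemma inductive_invariant_safe s : holds s I -> holds s P.
Proof. destruct HI as [_ [_ Hsafe]]; specialize (Hsafe s); simpl in Hsafe; tauto. Qed.

End InductiveInvariant.

Definition affine2 (f : Z -> Z -> Z) : Prop :=
  exists a b c, forall X Y, f X Y = a + b * X + c * Y.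

Lemma affine2_sgn_eventually (f : Z -> Z -> Z) : affine2 f ->
  exists N, forall X, N <= X -> Z.sgn (f X (X * X)) = Z.sgn (f X (X * X + 1)).
Proof.
  intros (a & b & c & Hf). exists (Z.abs a + Z.abs b + 1). intros X HX.
  rewrite !Hf.
  (* For X > |a| + |b| the quadratic term c X^2 dominates a + b X unless c = 0. *)
  assert (Hdom : Z.abs a + Z.abs b * X < X * X) by nia.
  destruct (Z.lt_trichotomy c 0) as [Hc | [-> | Hc]].
  - assert (a + b * X + c * (X * X) < 0) by nia.
    assert (a + b * X + c * (X * X + 1) < 0) by nia. lia.
  - lia.
  - assert (0 < a + b * X + c * (X * X)) by nia.
    assert (0 < a + b * X + c * (X * X + 1)) by nia. lia.
Qed.

Section AffineFamily.
Context {V : Type} {s : Z -> Z -> V -> Z}.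
Hypothesis Hs : forall a, affine2 (fun X Y => s X Y a).

Lemma eval_term_affine2 (e : term V) : affine2 (fun X Y => eval_term (s X Y) e).
Proof.
  induction e as [k | a | e1 (a1 & b1 & c1 & H1) e2 (a2 & b2 & c2 & H2) | k e (a & b & c & H)];
    simpl.
  - exists k, 0, 0; intros; ring.
  - apply Hs.
  - exists (a1 + a2), (b1 + b2), (c1 + c2); intros; rewrite H1, H2; ring.
  - exists (k * a), (k * b), (k * c); intros; rewrite H; ring.
Qed.

Lemma holds_eventually_shift_invariant (f : formula V) : exists N, forall X, N <= X ->
  (holds (s X (X * X)) f <-> holds (s X (X * X + 1)) f).
Proof.
  (* An atom compares [t] with [w] through the sign of the affine term [t - w]. *)
  assert (Hatom : forall t w : term V, exists N, forall X, N <= X ->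
    Z.sgn (eval_term (s X (X * X)) t - eval_term (s X (X * X)) w)
    = Z.sgn (eval_term (s X (X * X + 1)) t - eval_term (s X (X * X + 1)) w)).
  { intros t w.
    destruct (affine2_sgn_eventually _ (eval_term_affine2 (TAdd t (TMul (-1) w))))
      as [N HN].
    exists N; intros X HX; specialize (HN X HX); cbn [eval_term] in HN; lia. }
  induction f as [ | | t w | t w | t w | f [N HN]
                 | f [N HN] g [M HM] | f [N HN] g [M HM]]; simpl.
  1, 2: exists 0; tauto.
  1-3: destruct (Hatom t w) as [N HN]; exists N; intros X HX; specialize (HN X HX); lia.
  1: exists N; intros X HX; specialize (HN X HX); tauto.
  1, 2: exists (Z.max N M); intros X HX;
    specialize (HN X ltac:(lia)); specialize (HM X ltac:(lia)); tauto.
Qed.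

End AffineFamily.

Definition state_of (l X Z1 Z2 Y1 Y2 : Z) : var -> Z :=
  fun a => match a with pc => l | x => X | z1 => Z1 | z2 => Z2 | y1 => Y1 | y2 => Y2 end.

Ltac unfold_prog := cbn [holds eval_term pair_state is_transition ts_Init ts_TR T_Prog
  Init_Prog TR_Prog P_Prog FImp keep u p c v state_of] in *.

Definition prog_invariant (s : var -> Z) : Prop :=
  0 < s x /\
  ((s pc = 0 /\ s z1 = s x /\ s y1 = 0 /\ s z2 = 2 * s x /\ s y2 = 0) \/
   (s pc = 1 /\ 0 <= s z1 /\ s y1 = s x * (s x - s z1) /\ s z2 = 2 * s x /\ s y2 = 0) \/
   (s pc = 2 /\ s z1 = 0 /\ s y1 = s x * s x /\ 0 <= s z2 /\ s y2 = s x * (2 * s x - s z2)) \/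
   (s pc = 3 /\ s z2 = 0 /\ s y1 = s x * s x /\ s y2 = 2 * s x * s x)).

Lemma reachable_prog_invariant s : reachable T_Prog s -> prog_invariant s.
Proof.
  unfold prog_invariant.
  induction 1 as [s Hinit | s t _ [Hx IH] Hst]; unfold_prog.
  - lia.
  - split; [destruct Hst as [H | [H | [H | [H | H]]]]; lia |].
    destruct IH as [I | [I | [I | I]]]; destruct Hst as [H | [H | [H | [H | H]]]];
      try (exfalso; lia); intuition nia.
Qed.

Lemma first_loop_leads_to X Z2 Y1 Y2 l n : (l = 0 \/ l = 1) -> 0 <= n ->
  leads_to T_Prog (state_of l X n Z2 Y1 Y2) (state_of 2 X 0 Z2 (Y1 + n * X) Y2).
Proof.
  intros Hl Hn. rewrite <- (Z2Nat.id n Hn). generalize (Z.to_nat n) as k; clear n Hn.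
  induction k as [| k IHk] in Y1, l, Hl |- *.
  - replace (Y1 + Z.of_nat 0 * X) with Y1 by lia.
    apply rt_step; unfold_prog; lia.
  - eapply rt_trans; [apply rt_step | ].
    2: replace (Y1 + Z.of_nat (S k) * X) with (Y1 + X + Z.of_nat k * X) by lia;
       apply (IHk _ 1); lia.
    unfold_prog; lia.
Qed.

Lemma second_loop_leads_to X Z1 Y1 Y2 n : 0 <= n ->
  leads_to T_Prog (state_of 2 X Z1 n Y1 Y2) (state_of 3 X Z1 0 Y1 (Y2 + n * X)).
Proof.
  intros Hn. rewrite <- (Z2Nat.id n Hn). generalize (Z.to_nat n) as k; clear n Hn.
  induction k as [| k IHk] in Y2 |- *.
  - replace (Y2 + Z.of_nat 0 * X) with Y2 by lia.
    apply rt_step; unfold_prog; lia.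
  - eapply rt_trans; [apply rt_step | ].
    2: replace (Y2 + Z.of_nat (S k) * X) with (Y2 + X + Z.of_nat k * X) by lia; apply IHk.
    unfold_prog; lia.
Qed.

Definition second_loop_entry (X Y : Z) : var -> Z := state_of 2 X 0 (2 * X) Y 0.

Lemma second_loop_entry_affine2 a : affine2 (fun X Y => second_loop_entry X Y a).
Proof.
  destruct a; [exists 2, 0, 0 | exists 0, 1, 0 | exists 0, 0, 0
             | exists 0, 2, 0 | exists 0, 0, 1 | exists 0, 0, 0];
    intros; cbn [second_loop_entry state_of]; ring.
Qed.

Theorem mainTheorem2 :
  models T_Prog P_Prog /\
  ~ (exists I : formula var, inductive_invariant T_Prog P_Prog I).
Proof.
  split.
  - intros s Hs; apply reachable_prog_invariant in Hs; unfold prog_invariant in Hs.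
    unfold_prog; destruct (Z.eq_dec (s pc) 3); [right | left]; nia.
  - intros [I HI].
    destruct (holds_eventually_shift_invariant second_loop_entry_affine2 I) as [N HN].
    set (X := Z.max N 1).
    assert (Hsquare : holds (second_loop_entry X (X * X)) I).
    { apply (inductive_invariant_leads_to HI (state_of 0 X X (2 * X) 0 0)).
      - replace (X * X) with (0 + X * X) by lia.
        apply first_loop_leads_to; lia.
      - apply (inductive_invariant_init HI); unfold_prog; lia. }
    apply HN in Hsquare; [ | lia].
    assert (Hend : holds (state_of 3 X 0 0 (X * X + 1) (0 + 2 * X * X)) I).
    { apply (inductive_invariant_leads_to HI _ _
               (second_loop_leads_to X 0 (X * X + 1) 0 (2 * X) ltac:(lia)) Hsquare). }
    apply (inductive_invariant_safe HI) in Hend; unfold_prog; lia.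
Qed.
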